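(* If $a>b\geq c>d>0$, then $$\frac{L(a,b)}{L(c,d)}>1+\ln\frac{G(a,b)}{G(c,d)}>\frac{2ab}{ab+cd} \qquad\text{and}\qquad \frac{L(a,b)}{L(c,d)}>\frac{\ln\frac{G(a,b)}{G(c,d)}}{\ln\frac{I(a,b)}{I(c,d)}}.$$ In particular, if $a>b>0$, then $$\frac{L(a,b)}{b}>1+\frac{1}{2}\ln\frac{a}{b}>\frac{2a}{a+b}>\frac{\ln\frac{a}{b}}{2\ln\frac{I(a,b)}{b}}.$$
   Context: For $u,v>0$: $G(u,v)=\sqrt{uv}$; the logarithmic mean is $L(u,v)=\frac{u-v}{\ln u-\ln v}$ if $u\neq v$ and $L(u,u)=u$; the identric mean is $I(u,v)=\frac{1}{e}\left(\frac{u^u}{v^v}\right)^{1/(u-v)}$ if $u\neq v$ and $I(u,u)=u$. *)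

From Stdlib Require Import Reals.
Open Scope R_scope.

Definition Gmean (u v : R) : R := sqrt (u * v).

Definition Lmean (u v : R) : R :=
  if Req_EM_T u v then u else (u - v) / (ln u - ln v).

Definition Imean (u v : R) : R :=
  if Req_EM_T u v then u
  else / exp 1 * Rpower (Rpower u u / Rpower v v) (/ (u - v)).

From Stdlib Require Import Reals Lra.
From Coquelicot Require Import Coquelicot.
Open Scope R_scope.

(* For [x > 1] the bounds [2 (x - 1) / (x + 1) < ln x] and [ln x + (ln x)^2 / 2 < x - 1]
   give, with [x = u / v], the estimate [v (1 + ln (u / v) / 2) < L(u,v) < (u + v) / 2].
   The identric mean is tied to [L] by [ln (I(u,v) / v) = u / L(u,v) - 1] and
   [ln (u / I(u,v)) = 1 - v / L(u,v)].  For [a > b >= c > d], factor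
   [L(a,b) / L(c,d) = (L(a,b) / b) (b / c) (c / L(c,d))]: each factor exceeds one plus the
   matching summand of [g = ln (G(a,b) / G(c,d)) = ln (a/b) / 2 + ln (b/c) + ln (c/d) / 2],
   so the product exceeds [1 + g].  Splitting [ln (I(a,b) / I(c,d))] at [b] and [c] in the
   same way bounds it below by [g / (1 + g)], whence [g / ln (I(a,b) / I(c,d)) < 1 + g].
   In the two-point chain the last inequality is just [G(a,b) < I(a,b)], which makes the
   left side smaller than [1 < 2a / (a + b)]. *)

Lemma pos_of_deriv_pos (f f' : R -> R) (l : R) :
  f 0 = 0 -> (forall c, derivable_pt_lim f c (f' c)) ->
  (forall c, 0 < c -> 0 < f' c) -> 0 < l -> 0 < f l.
Proof.
  intros H0 Hd Hpos Hl.
  destruct (MVT_cor2 f f' 0 l Hl (fun c _ => Hd c)) as [c [Hmvt Hc]].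
  assert (0 < f' c * (l - 0)) by (apply Rmult_lt_0_compat; [apply Hpos|]; lra).
  lra.
Qed.

Lemma exp_gt_taylor2 (l : R) : 0 < l -> 1 + l + l ^ 2 / 2 < exp l.
Proof.
  intro Hl.
  enough (0 < exp l - 1 - l - l ^ 2 / 2) by lra.
  apply (pos_of_deriv_pos (fun x => exp x - 1 - x - x ^ 2 / 2)
           (fun x => exp x - 1 - x)); auto.
  - simpl; rewrite exp_0; field.
  - intro c. apply is_derive_Reals. auto_derive; auto. field.
  - intros c Hc. pose proof (exp_ineq1 c). lra.
Qed.

Lemma exp_sub1_lt_half_mul (l : R) : 0 < l -> 2 * (exp l - 1) < l * (exp l + 1).
Proof.
  intro Hl.
  enough (0 < l * (exp l + 1) - 2 * (exp l - 1)) by lra.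
  apply (pos_of_deriv_pos (fun x => x * (exp x + 1) - 2 * (exp x - 1))
           (fun x => exp x * (x - 1 + exp (- x)))); auto.
  - rewrite exp_0; ring.
  - intro c. apply is_derive_Reals. auto_derive; auto.
    rewrite exp_Ropp. field. apply Rgt_not_eq, exp_pos.
  - intros c Hc. apply Rmult_lt_0_compat; [apply exp_pos|].
    assert (c <> 0) by lra.
    pose proof (exp_ineq1 (- c)). lra.
Qed.

Lemma ln_le_sub1 (x : R) : 0 < x -> ln x <= x - 1.
Proof. intro Hx. pose proof (exp_ineq1_le (ln x)). rewrite exp_ln in H; lra. Qed.

Lemma ln_pos_of_gt1 (x : R) : 1 < x -> 0 < ln x.
Proof. intro Hx. rewrite <- ln_1. apply ln_increasing; lra. Qed.

Lemma ln_add_half_sq_lt (x : R) : 1 < x -> ln x + ln x ^ 2 / 2 < x - 1.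
Proof.
  intro Hx. pose proof (exp_gt_taylor2 _ (ln_pos_of_gt1 _ Hx)).
  rewrite exp_ln in H; lra.
Qed.

Lemma ln_mul_succ_gt (x : R) : 1 < x -> 2 * (x - 1) < ln x * (x + 1).
Proof.
  intro Hx. pose proof (exp_sub1_lt_half_mul _ (ln_pos_of_gt1 _ Hx)).
  rewrite exp_ln in H; lra.
Qed.

Lemma succ_half_ln_gt (x : R) : 1 < x -> 2 * x / (x + 1) < 1 + / 2 * ln x.
Proof.
  intro Hx. pose proof (ln_mul_succ_gt _ Hx).
  apply (Rmult_lt_reg_r (x + 1)); [lra|].
  replace (2 * x / (x + 1) * (x + 1)) with (2 * x) by (field; lra). lra.
Qed.

Lemma div_succ_add3_le (x y z : R) : 0 <= x -> 0 <= y -> 0 <= z ->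
  (x + y + z) / (1 + (x + y + z)) <= x + y + z / (1 + z).
Proof.
  intros Hx Hy Hz.
  apply (Rmult_le_reg_r ((1 + (x + y + z)) * (1 + z))); [nra|].
  field_simplify; [|lra|lra].
  assert (0 <= (x + y) * (x + y + z) * (1 + z)) by (repeat apply Rmult_le_pos; lra).
  assert (0 <= z * (x + y)) by nra.
  nra.
Qed.

Lemma div_lt_succ_of_gt (g y : R) : 0 < g -> g / (1 + g) < y -> g / y < 1 + g.
Proof.
  intros Hg Hy.
  assert (Hgy : 0 < g / (1 + g)) by (apply Rdiv_lt_0_compat; lra).
  apply (Rmult_lt_reg_r y); [lra|].
  replace (g / y * y) with g by (field; lra).
  replace g with (g / (1 + g) * (1 + g)) at 1 by (field; lra).
  rewrite (Rmult_comm (1 + g)). apply Rmult_lt_compat_r; lra.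
Qed.

Lemma ln_Gmean_div (u v w z : R) : 0 < u -> 0 < v -> 0 < w -> 0 < z ->
  ln (Gmean u v / Gmean w z) = / 2 * ln (u * v / (w * z)).
Proof.
  intros. unfold Gmean.
  assert (0 < u * v / (w * z)) by (apply Rdiv_lt_0_compat; apply Rmult_lt_0_compat; auto).
  rewrite <- sqrt_div, <- Rpower_sqrt, ln_Rpower by (auto; nra). reflexivity.
Qed.

Section TwoPoints.

Variables u v : R.
Hypothesis Hvu : v < u.
Hypothesis Hv : 0 < v.

Lemma div_gt1 : 1 < u / v.
Proof. apply (Rmult_lt_reg_r v); auto. field_simplify; lra. Qed.

Lemma ln_div_pos : 0 < ln (u / v).
Proof. exact (ln_pos_of_gt1 _ div_gt1). Qed.

Lemma Lmean_eq : Lmean u v = (u - v) / ln (u / v).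
Proof.
  unfold Lmean. destruct Req_EM_T; [lra|]. rewrite ln_div by lra. reflexivity.
Qed.

Lemma Lmean_gt : v * (1 + / 2 * ln (u / v)) < Lmean u v.
Proof.
  pose proof ln_div_pos as Hl.
  pose proof (ln_add_half_sq_lt _ div_gt1) as Hk.
  assert (Hu : u = v * (u / v)) by (field; lra).
  rewrite Lmean_eq. apply (Rmult_lt_reg_r (ln (u / v))); auto.
  replace ((u - v) / ln (u / v) * ln (u / v)) with (u - v) by (field; lra).
  set (x := u / v) in *. nra.
Qed.

Lemma Lmean_lt_amean : Lmean u v < (u + v) / 2.
Proof.
  pose proof ln_div_pos as Hl.
  pose proof (ln_mul_succ_gt _ div_gt1) as Hk.
  assert (Hu : u = v * (u / v)) by (field; lra).
  rewrite Lmean_eq. apply (Rmult_lt_reg_r (ln (u / v))); auto.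
  replace ((u - v) / ln (u / v) * ln (u / v)) with (u - v) by (field; lra).
  set (x := u / v) in *. nra.
Qed.

Lemma Lmean_pos : 0 < Lmean u v.
Proof. pose proof Lmean_gt. pose proof ln_div_pos. nra. Qed.

Lemma Lmean_div_gt : 1 + / 2 * ln (u / v) < Lmean u v / v.
Proof.
  pose proof Lmean_gt. apply (Rmult_lt_reg_r v); auto.
  replace (Lmean u v / v * v) with (Lmean u v) by (field; lra). lra.
Qed.

Lemma div_Lmean_gt : 1 + / 2 * ln (u / v) < u / Lmean u v.
Proof.
  pose proof Lmean_lt_amean. pose proof Lmean_pos.
  assert (Hl : Lmean u v * ln (u / v) = u - v)
    by (rewrite Lmean_eq; field; pose proof ln_div_pos; lra).
  apply (Rmult_lt_reg_r (Lmean u v)); auto.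
  replace (u / Lmean u v * Lmean u v) with u by (field; lra). nra.
Qed.

Lemma Imean_eq : Imean u v = exp ((u * ln u - v * ln v) / (u - v) - 1).
Proof.
  unfold Imean. destruct Req_EM_T; [lra|]. unfold Rpower.
  rewrite <- exp_Ropp, <- exp_plus, ln_div, !ln_exp by apply exp_pos.
  f_equal. field. lra.
Qed.

Lemma Imean_pos : 0 < Imean u v.
Proof. rewrite Imean_eq. apply exp_pos. Qed.

Lemma ln_Imean_div : ln (Imean u v / v) = u / Lmean u v - 1.
Proof.
  rewrite ln_div, Imean_eq, ln_exp, Lmean_eq, ln_div by (auto using Imean_pos; lra).
  field. pose proof ln_div_pos as Hl. rewrite ln_div in Hl by lra. lra.
Qed.

Lemma ln_div_Imean : ln (u / Imean u v) = 1 - v / Lmean u v.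
Proof.
  rewrite ln_div, Imean_eq, ln_exp, Lmean_eq, ln_div by (auto using Imean_pos; lra).
  field. pose proof ln_div_pos as Hl. rewrite ln_div in Hl by lra. lra.
Qed.

Lemma ln_Imean_div_gt : / 2 * ln (u / v) < ln (Imean u v / v).
Proof. rewrite ln_Imean_div. pose proof div_Lmean_gt. lra. Qed.

Lemma ln_div_Imean_gt : ln (u / v) / (2 + ln (u / v)) < ln (u / Imean u v).
Proof.
  rewrite ln_div_Imean. pose proof Lmean_gt. pose proof Lmean_pos. pose proof ln_div_pos.
  assert (Hlt : v / Lmean u v < 2 / (2 + ln (u / v))).
  { apply (Rmult_lt_reg_r (Lmean u v * (2 + ln (u / v)))); [nra|].
    field_simplify; lra. }
  replace (ln (u / v) / (2 + ln (u / v))) with (1 - 2 / (2 + ln (u / v)))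
    by (field; lra).
  lra.
Qed.

Lemma two_mul_div_add_lt : 2 * u / (u + v) < 1 + / 2 * ln (u / v).
Proof.
  replace (2 * u / (u + v)) with (2 * (u / v) / (u / v + 1)) by (field; lra).
  exact (succ_half_ln_gt _ div_gt1).
Qed.

Lemma ln_div_Imean_ratio_lt : ln (u / v) / (2 * ln (Imean u v / v)) < 2 * u / (u + v).
Proof.
  pose proof ln_Imean_div_gt. pose proof ln_div_pos.
  apply Rlt_trans with 1.
  - apply (Rmult_lt_reg_r (2 * ln (Imean u v / v))); [lra|].
    field_simplify; lra.
  - apply (Rmult_lt_reg_r (u + v)); [lra|]. field_simplify; lra.
Qed.

End TwoPoints.

Section FourPoints.

Variables a b c d : R.
Hypothesis Hab : b < a.
Hypothesis Hbc : c <= b.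
Hypothesis Hcd : d < c.
Hypothesis Hd : 0 < d.

Lemma ln_div_nonneg : 0 <= ln (b / c).
Proof.
  rewrite ln_div by lra. pose proof (ln_le c b). lra.
Qed.

Lemma ln_Gmean_ratio_eq :
  ln (Gmean a b / Gmean c d) = / 2 * ln (a / b) + ln (b / c) + / 2 * ln (c / d).
Proof.
  rewrite ln_Gmean_div, ln_div, !ln_mult, !ln_div by (try apply Rmult_lt_0_compat; lra).
  field.
Qed.

Lemma Lmean_ratio_gt : 1 + ln (Gmean a b / Gmean c d) < Lmean a b / Lmean c d.
Proof.
  rewrite ln_Gmean_ratio_eq.
  assert (Hx1 : 0 < / 2 * ln (a / b)) by (pose proof (ln_div_pos a b Hab ltac:(lra)); lra).
  pose proof ln_div_nonneg as Hx2.
  assert (Hx3 : 0 < / 2 * ln (c / d)) by (pose proof (ln_div_pos c d Hcd Hd); lra).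
  pose proof (Lmean_div_gt a b Hab ltac:(lra)) as Hp.
  pose proof (div_Lmean_gt c d Hcd Hd) as Hr.
  assert (Hq : 1 + ln (b / c) <= b / c)
    by (pose proof (ln_le_sub1 (b / c) ltac:(apply Rdiv_lt_0_compat; lra)); lra).
  pose proof (Lmean_pos c d Hcd Hd).
  replace (Lmean a b / Lmean c d) with (Lmean a b / b * (b / c) * (c / Lmean c d))
    by (field; lra).
  set (x1 := / 2 * ln (a / b)) in *. set (x2 := ln (b / c)) in *.
  set (x3 := / 2 * ln (c / d)) in *.
  set (p := Lmean a b / b) in *. set (q := b / c) in *. set (r := c / Lmean c d) in *.
  assert (Hpq : (1 + x1) * (1 + x2) < p * q) by nra.
  assert (Hpqr : (1 + x1) * (1 + x2) * (1 + x3) < p * q * r)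
    by (apply Rmult_le_0_lt_compat; nra).
  assert (1 + x1 + x2 + x3 <= (1 + x1) * (1 + x2) * (1 + x3)).
  { assert (0 <= x1 * x2) by nra. assert (0 <= x1 * x2 * x3) by nra. nra. }
  lra.
Qed.

Lemma two_mul_div_add_mul_lt :
  2 * a * b / (a * b + c * d) < 1 + ln (Gmean a b / Gmean c d).
Proof.
  assert (Hs : 1 < a * b / (c * d)).
  { apply (Rmult_lt_reg_r (c * d)); [nra|]. field_simplify; nra. }
  rewrite ln_Gmean_div by lra.
  replace (2 * a * b / (a * b + c * d)) with
    (2 * (a * b / (c * d)) / (a * b / (c * d) + 1)) by (field; nra).
  exact (succ_half_ln_gt _ Hs).
Qed.

Lemma ln_Gmean_ratio_pos : 0 < ln (Gmean a b / Gmean c d).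
Proof.
  rewrite ln_Gmean_ratio_eq.
  pose proof (ln_div_pos a b Hab ltac:(lra)). pose proof ln_div_nonneg.
  pose proof (ln_div_pos c d Hcd Hd). lra.
Qed.

Lemma ln_Imean_ratio_gt :
  ln (Gmean a b / Gmean c d) / (1 + ln (Gmean a b / Gmean c d))
  < ln (Imean a b / Imean c d).
Proof.
  assert (Hsplit : ln (Imean a b / Imean c d)
                   = ln (Imean a b / b) + ln (b / c) + ln (c / Imean c d)).
  { pose proof (Imean_pos a b Hab). pose proof (Imean_pos c d Hcd).
    rewrite !ln_div by lra. ring. }
  rewrite Hsplit, ln_Gmean_ratio_eq.
  pose proof (ln_Imean_div_gt a b Hab ltac:(lra)) as HIab.
  pose proof (ln_div_Imean_gt c d Hcd Hd) as HIcd.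
  pose proof (ln_div_pos a b Hab ltac:(lra)). pose proof ln_div_nonneg.
  pose proof (ln_div_pos c d Hcd Hd).
  replace (ln (c / d) / (2 + ln (c / d))) with (/ 2 * ln (c / d) / (1 + / 2 * ln (c / d)))
    in HIcd by (field; lra).
  eapply Rle_lt_trans; [apply div_succ_add3_le; lra|]. lra.
Qed.

Lemma Lmean_ratio_gt_ln_ratio :
  ln (Gmean a b / Gmean c d) / ln (Imean a b / Imean c d) < Lmean a b / Lmean c d.
Proof.
  eapply Rlt_trans; [|exact Lmean_ratio_gt].
  exact (div_lt_succ_of_gt _ _ ln_Gmean_ratio_pos ln_Imean_ratio_gt).
Qed.

End FourPoints.

Theorem theorem3p2 :
  (forall a b c d : R, a > b -> b >= c -> c > d -> d > 0 ->
     Lmean a b / Lmean c d > 1 + ln (Gmean a b / Gmean c d) /\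
     1 + ln (Gmean a b / Gmean c d) > 2 * a * b / (a * b + c * d) /\
     Lmean a b / Lmean c d >
       ln (Gmean a b / Gmean c d) / ln (Imean a b / Imean c d)) /\
  (forall a b : R, a > b -> b > 0 ->
     Lmean a b / b > 1 + / 2 * ln (a / b) /\
     1 + / 2 * ln (a / b) > 2 * a / (a + b) /\
     2 * a / (a + b) > ln (a / b) / (2 * ln (Imean a b / b))).
Proof.
  split.
  - intros a b c d Hab Hbc Hcd Hd. apply Rge_le in Hbc.
    split; [|split].
    + exact (Lmean_ratio_gt a b c d Hab Hbc Hcd Hd).
    + exact (two_mul_div_add_mul_lt a b c d Hab Hbc Hcd Hd).
    + exact (Lmean_ratio_gt_ln_ratio a b c d Hab Hbc Hcd Hd).
  - intros a b Hab Hb. split; [|split].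
    + exact (Lmean_div_gt a b Hab Hb).
    + exact (two_mul_div_add_lt a b Hab Hb).
    + exact (ln_div_Imean_ratio_lt a b Hab Hb).
Qed.
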